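(* For every $n\ge 4$, the number of magic quad squares of type C in the EvenQuads-$2^n$ deck is \[10 + 85(2^n-16) + 43(2^n-16)(2^n-32) + (2^n-16)(2^n-32)(2^n-64).\]
   Context: The EvenQuads-$2^n$ deck consists of $2^n$ cards identified with the integers $0,1,\dots,2^n-1$. Four cards $a,b,c,d$ form a quad if and only if $a\oplus b\oplus c\oplus d=0$, where $\oplus$ is bitwise XOR. A quad square is a $4\times4$ array of $16$ pairwise distinct cards; it is magic if each of its four rows, four columns and two diagonals forms a quad. It is of type C if its first row is $0,1,2,3$ (left to right) and its first column is $0,4,8,12$ (top to bottom). *)

From Stdlib Require Import PeanoNat.
From mathcomp Require Import all_boot all_order all_algebra.
Set Implicit Arguments. Unset Strict Implicit. Unset Printing Implicit Defensive.

(* Cards of the EvenQuads-2^n deck: integers 0 .. 2^n - 1, i.e. 'I_(2^n). *)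

Definition is_quad (a b c d : nat) : bool :=
  Nat.lxor (Nat.lxor (Nat.lxor a b) c) d == 0.

(* A 4x4 array of cards; entry (i, j) = row i, column j (0-indexed,
   row 0 is the top row, column 0 the leftmost column). *)
Definition ix (k : nat) : 'I_4 := @inord 3 k.

Definition square (n : nat) := {ffun 'I_4 * 'I_4 -> 'I_(2 ^ n)}.

Definition quad_square n (S : square n) : bool := injectiveb S.

Definition row_quad n (S : square n) (i : 'I_4) : bool :=
  is_quad (S (i, ix 0)) (S (i, ix 1)) (S (i, ix 2)) (S (i, ix 3)).
Definition col_quad n (S : square n) (j : 'I_4) : bool :=
  is_quad (S (ix 0, j)) (S (ix 1, j)) (S (ix 2, j)) (S (ix 3, j)).
Definition diag_quad n (S : square n) : bool :=
  is_quad (S (ix 0, ix 0)) (S (ix 1, ix 1)) (S (ix 2, ix 2)) (S (ix 3, ix 3)).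
Definition antidiag_quad n (S : square n) : bool :=
  is_quad (S (ix 0, ix 3)) (S (ix 1, ix 2)) (S (ix 2, ix 1)) (S (ix 3, ix 0)).

Definition magic n (S : square n) : bool :=
  [&& [forall i, row_quad S i], [forall j, col_quad S j],
      diag_quad S & antidiag_quad S].

Definition typeC n (S : square n) : bool :=
  [forall j : 'I_4, (S (ix 0, j) : nat) == j] &&
  [forall i : 'I_4, (S (i, ix 0) : nat) == 4 * i].

Definition magic_typeC_squares n : {set square n} :=
  [set S : square n | [&& quad_square S, magic S & typeC S]].

From Stdlib Require Import PeanoNat.
From mathcomp Require Import all_boot all_order all_algebra ring.

(* The row, column and antidiagonal quads of a magic square of type C determine
   every entry as the XOR of a combination of x = S(1,1), y = S(1,2), z = S(2,2)
   with a constant below 16, and conversely every triple (x, y, z) gives a magic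
   square of type C; it is a quad square iff its 16 entries are distinct.
   Writing x, y, z as 16 * (high part) + (low part), two entries coincide iff
   their low parts agree and a fixed F_2-combination of the high parts vanishes.
   Hence the number of admissible low parts depends only on the kernel of the
   high triple, one of the 16 subspaces of F_2^3, and it is computed once for
   each of them.  With M = 2^(n-4), a subspace of codimension d is the kernel
   of (M-1)(M-2)...(M-2^(d-1)) high triples, which gives the polynomial. *)

Lemma expn_pow m k : m ^ k = Nat.pow m k.
Proof. by elim: k => // k IHk; rewrite expnS IHk. Qed.

Lemma lxor_eq0 a b : (Nat.lxor a b == 0) = (a == b).
Proof. by apply/eqP/eqP => [/Nat.lxor_eq | ->]; rewrite ?Nat.lxor_nilpotent. Qed.

Lemma lxor_eq_l a b : (Nat.lxor a b == a) = (b == 0).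
Proof. by rewrite -lxor_eq0 Nat.lxor_comm -Nat.lxor_assoc Nat.lxor_nilpotent Nat.lxor_0_l. Qed.

Lemma lxor_eq_r a b : (Nat.lxor a b == b) = (a == 0).
Proof. by rewrite Nat.lxor_comm lxor_eq_l. Qed.

Lemma lxorACA a b c d :
  Nat.lxor (Nat.lxor a b) (Nat.lxor c d) = Nat.lxor (Nat.lxor a c) (Nat.lxor b d).
Proof.
apply: Nat.bits_inj => i; rewrite !Nat.lxor_spec.
by case: (Nat.testbit a i); case: (Nat.testbit b i); case: (Nat.testbit c i);
  case: (Nat.testbit d i).
Qed.

Lemma testbit_ltn_pow2 k b i : b < 2 ^ k -> k <= i -> Nat.testbit b i = false.
Proof.
move=> lt_b le_ki; rewrite -(Nat.mod_small b (Nat.pow 2 k)); last by apply/ltP; rewrite -expn_pow.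
by apply: Nat.mod_pow2_bits_high; apply/leP.
Qed.

Lemma testbit_mul_pow2_add k a b i : b < 2 ^ k ->
  Nat.testbit (a * 2 ^ k + b) i = if i < k then Nat.testbit b i else Nat.testbit a (i - k).
Proof.
move=> lt_b; have no_carry : Nat.land (a * Nat.pow 2 k) b = 0.
  apply: Nat.bits_inj => j; rewrite Nat.land_spec Nat.bits_0.
  case: (ltnP j k) => [lt_jk | le_kj]; first by rewrite Nat.mul_pow2_bits_low //; apply/ltP.
  by rewrite (testbit_ltn_pow2 _ _ _ lt_b le_kj) andbF.
rewrite expn_pow -multE -plusE Nat.add_nocarry_lxor // Nat.lxor_spec.
case: (ltnP i k) => [lt_ik | le_ki]; first by rewrite Nat.mul_pow2_bits_low //; apply/ltP.
rewrite Nat.mul_pow2_bits_high; last exact/leP.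
by rewrite (testbit_ltn_pow2 _ _ _ lt_b le_ki) Bool.xorb_false_r.
Qed.

Lemma lxor_ltn_pow2 k a b : a < 2 ^ k -> b < 2 ^ k -> Nat.lxor a b < 2 ^ k.
Proof.
move=> lt_a lt_b; set c := Nat.lxor a b.
have lt_c_mod : c %% 2 ^ k < 2 ^ k by rewrite ltn_pmod // expn_gt0.
have c_div0 : c %/ 2 ^ k = 0.
  apply: Nat.bits_inj => i; rewrite Nat.bits_0.
  have := testbit_mul_pow2_add _ (c %/ 2 ^ k) _ (i + k) lt_c_mod.
  rewrite -divn_eq ltnNge leq_addl addnK /= => <-.
  by rewrite Nat.lxor_spec !(testbit_ltn_pow2 _ _ _ _ (leq_addl i k)).
by rewrite (divn_eq c (2 ^ k)) c_div0 mul0n add0n.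
Qed.

Lemma lxor_mul_pow2_add k a b c d : b < 2 ^ k -> d < 2 ^ k ->
  Nat.lxor (a * 2 ^ k + b) (c * 2 ^ k + d) = Nat.lxor a c * 2 ^ k + Nat.lxor b d.
Proof.
move=> lt_b lt_d; apply: Nat.bits_inj => i.
rewrite Nat.lxor_spec !testbit_mul_pow2_add ?lxor_ltn_pow2 //.
by case: ifP; rewrite Nat.lxor_spec.
Qed.

Lemma eq_mul_add_ltn D a b c d : b < D -> d < D ->
  (a * D + b == c * D + d) = (a == c) && (b == d).
Proof.
move=> lt_b lt_d; apply/eqP/andP => [E | [/eqP-> /eqP->] //].
have D_gt0 : 0 < D := leq_ltn_trans (leq0n b) lt_b.
have := congr1 (divn^~ D) E; have := congr1 (modn^~ D) E => /=.
by rewrite !modnMDl !modn_small // !divnMDl // !divn_small // !addn0 => -> ->.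
Qed.

Lemma big_nat_mul_add M d (F : nat -> nat) :
  \sum_(0 <= x < M * d) F x = \sum_(0 <= h < M) \sum_(0 <= l < d) F (h * d + l).
Proof.
rewrite big_nat_mul; apply: eq_bigr => h _.
rewrite -{1}[h * d]add0n big_addn mulSn addnK.
by apply: eq_bigr => l _; rewrite addnC.
Qed.

Lemma big_nat_mul_add3 M d (G : nat -> nat -> nat -> nat) :
  \sum_(0 <= x < M * d) \sum_(0 <= y < M * d) \sum_(0 <= z < M * d) G x y z =
  \sum_(0 <= xh < M) \sum_(0 <= yh < M) \sum_(0 <= zh < M)
    \sum_(0 <= xl < d) \sum_(0 <= yl < d) \sum_(0 <= zl < d)
      G (xh * d + xl) (yh * d + yl) (zh * d + zl).
Proof.
rewrite big_nat_mul_add; apply: eq_bigr => xh _.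
under eq_bigr => xl _ do rewrite big_nat_mul_add.
rewrite exchange_big; apply: eq_bigr => yh _.
under eq_bigr => xl _ do under eq_bigr => yl _ do rewrite big_nat_mul_add.
under eq_bigr => xl _ do rewrite exchange_big.
by rewrite exchange_big.
Qed.

Lemma big_nat_const_off M (s : seq nat) (f : nat -> nat) c :
  uniq s -> all (fun z => z < M) s -> (forall z, z < M -> z \notin s -> f z = c) ->
  \sum_(0 <= z < M) f z = \sum_(z <- s) f z + (M - size s) * c.
Proof.
move=> uniq_s lt_s off_s.
have perm_s : perm_eq [seq z <- index_iota 0 M | z \in s] s.
  apply: uniq_perm => [|//|z]; first by rewrite filter_uniq ?iota_uniq.
  rewrite mem_filter mem_index_iota /=; case: (boolP (z \in s)) => //= z_in.
  by move/allP: lt_s => /(_ z z_in) ->.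
rewrite (bigID (mem s)) /= -big_filter (perm_big _ perm_s); congr (_ + _).
rewrite big_seq_cond (eq_bigr (fun=> c)) => [|z /andP[]]; last first.
  by rewrite mem_index_iota => /andP[_ lt_z]; apply: off_s.
rewrite -big_seq_cond big_const_seq iter_addn_0 mulnC; congr (_ * _).
have := count_predC (fun z => z \in s) (index_iota 0 M).
rewrite size_iota subn0 -size_filter (perm_size perm_s) => E.
by rewrite -[in RHS]E addKn.
Qed.

Lemma card_triples N (P : nat -> nat -> nat -> bool) :
  #|[set t : 'I_N * 'I_N * 'I_N | P t.1.1 t.1.2 t.2]| =
  \sum_(0 <= x < N) \sum_(0 <= y < N) \sum_(0 <= z < N) P x y z.
Proof.
rewrite -sum1_card big_mkcond /=.
rewrite (eq_bigr (fun t : 'I_N * 'I_N * 'I_N => P t.1.1 t.1.2 t.2 : nat)) => [|t _]; last first.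
  by rewrite inE; case: (P _ _ _).
rewrite -(pair_bigA _ (fun (xy : 'I_N * 'I_N) (z : 'I_N) => P xy.1 xy.2 z : nat)) /=.
rewrite -(pair_bigA _ (fun (x y : 'I_N) => \sum_(z < N) P x y z : nat)) /=.
rewrite big_mkord; apply: eq_bigr => x _; rewrite big_mkord; apply: eq_bigr => y _.
by rewrite big_mkord.
Qed.

Definition form := (bool * bool * bool)%type.

Definition form_add (m1 m2 : form) : form :=
  (xorb m1.1.1 m2.1.1, xorb m1.1.2 m2.1.2, xorb m1.2 m2.2).

Definition sel (b : bool) (x : nat) := if b then x else 0.

Definition lin (m : form) x y z := Nat.lxor (Nat.lxor (sel m.1.1 x) (sel m.1.2 y)) (sel m.2 z).

Lemma testbit_lin m x y z i : Nat.testbit (lin m x y z) i =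
  xorb (xorb (m.1.1 && Nat.testbit x i) (m.1.2 && Nat.testbit y i)) (m.2 && Nat.testbit z i).
Proof. by case: m => [[[] []] []]; rewrite /lin /sel !Nat.lxor_spec ?Nat.bits_0. Qed.

Lemma lin_add m1 m2 x y z :
  Nat.lxor (lin m1 x y z) (lin m2 x y z) = lin (form_add m1 m2) x y z.
Proof.
apply: Nat.bits_inj => i; rewrite Nat.lxor_spec !testbit_lin.
case: m1 m2 => [[[] []] []] [[[] []] []];
  by case: (Nat.testbit x i); case: (Nat.testbit y i); case: (Nat.testbit z i).
Qed.

Lemma lin_ltn_pow2 k m x y z : x < 2 ^ k -> y < 2 ^ k -> z < 2 ^ k -> lin m x y z < 2 ^ k.
Proof.
have sel_ltn b w : w < 2 ^ k -> sel b w < 2 ^ k by case: b => //; rewrite expn_gt0.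
by move=> lt_x lt_y lt_z; rewrite /lin !lxor_ltn_pow2 ?sel_ltn.
Qed.

Lemma lin_mul_pow2_add k m xh xl yh yl zh zl : xl < 2 ^ k -> yl < 2 ^ k -> zl < 2 ^ k ->
  lin m (xh * 2 ^ k + xl) (yh * 2 ^ k + yl) (zh * 2 ^ k + zl) =
  lin m xh yh zh * 2 ^ k + lin m xl yl zl.
Proof.
have selD b h l : sel b (h * 2 ^ k + l) = sel b h * 2 ^ k + sel b l by case: b.
have sel_ltn b w : w < 2 ^ k -> sel b w < 2 ^ k by case: b => //; rewrite expn_gt0.
move=> lt_x lt_y lt_z; rewrite /lin !selD.
by rewrite !lxor_mul_pow2_add ?lxor_ltn_pow2 ?sel_ltn.
Qed.

Record affine := Affine { lpart : form; cpart : nat }.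

Definition eval_aff (e : affine) x y z := Nat.lxor (lin (lpart e) x y z) (cpart e).

Definition aff_add (e1 e2 : affine) :=
  Affine (form_add (lpart e1) (lpart e2)) (Nat.lxor (cpart e1) (cpart e2)).

Local Infix "⊕" := aff_add (at level 50, left associativity).

Definition aX := Affine (true, false, false) 0.
Definition aY := Affine (false, true, false) 0.
Definition aZ := Affine (false, false, true) 0.
Definition acst c := Affine (false, false, false) c.

Lemma eval_acst c x y z : eval_aff (acst c) x y z = c.
Proof. exact: Nat.lxor_0_l. Qed.

Lemma eval_aX x y z : eval_aff aX x y z = x.
Proof. by rewrite /eval_aff /lin /= !Nat.lxor_0_r. Qed.

Lemma eval_aY x y z : eval_aff aY x y z = y.
Proof. by rewrite /eval_aff /lin /= Nat.lxor_0_l !Nat.lxor_0_r. Qed.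

Lemma eval_aZ x y z : eval_aff aZ x y z = z.
Proof. by rewrite /eval_aff /lin /= !Nat.lxor_0_l Nat.lxor_0_r. Qed.

Lemma eval_aff_add e1 e2 x y z :
  Nat.lxor (eval_aff e1 x y z) (eval_aff e2 x y z) = eval_aff (e1 ⊕ e2) x y z.
Proof. by rewrite /eval_aff lxorACA lin_add. Qed.

Lemma eval_ltn_pow2 k e x y z : cpart e < 2 ^ k ->
  x < 2 ^ k -> y < 2 ^ k -> z < 2 ^ k -> eval_aff e x y z < 2 ^ k.
Proof. by move=> lt_c lt_x lt_y lt_z; rewrite lxor_ltn_pow2 ?lin_ltn_pow2. Qed.

Lemma eval_mul_pow2_add k e xh xl yh yl zh zl :
  cpart e < 2 ^ k -> xl < 2 ^ k -> yl < 2 ^ k -> zl < 2 ^ k ->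
  eval_aff e (xh * 2 ^ k + xl) (yh * 2 ^ k + yl) (zh * 2 ^ k + zl) =
  lin (lpart e) xh yh zh * 2 ^ k + eval_aff e xl yl zl.
Proof.
move=> lt_c lt_x lt_y lt_z; rewrite /eval_aff lin_mul_pow2_add //.
by rewrite -[cpart e]/(0 * 2 ^ k + cpart e) lxor_mul_pow2_add ?lin_ltn_pow2 // Nat.lxor_0_r.
Qed.

Lemma is_quad_eval e1 e2 e3 e4 x y z :
  is_quad (eval_aff e1 x y z) (eval_aff e2 x y z) (eval_aff e3 x y z) (eval_aff e4 x y z) =
  (eval_aff (e1 ⊕ e2 ⊕ e3 ⊕ e4) x y z == 0).
Proof. by rewrite /is_quad !eval_aff_add. Qed.

Lemma is_quad_swap a b c d : is_quad a b c d = is_quad a b d c.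
Proof. by rewrite /is_quad !Nat.lxor_assoc (Nat.lxor_comm c d). Qed.

Lemma quad_fourth a b c d ea eb ec ed x y z :
  is_quad a b c d -> a = eval_aff ea x y z -> b = eval_aff eb x y z ->
  c = eval_aff ec x y z -> ea ⊕ eb ⊕ ec ⊕ ed = acst 0 -> d = eval_aff ed x y z.
Proof.
move=> /eqP/Nat.lxor_eq <- -> -> -> sum0; rewrite !eval_aff_add.
by apply: Nat.lxor_eq; rewrite eval_aff_add sum0.
Qed.
Arguments quad_fourth {a b c d ea eb ec ed x y z}.

Definition typeC_cell (i j : nat) : affine :=
  match i, j with
  | 0, _ => acst j
  | _, 0 => acst (4 * i)
  | 1, 1 => aX                | 1, 2 => aY               | 1, 3 => aX ⊕ aY ⊕ acst 4
  | 2, 1 => aY ⊕ acst 15      | 2, 2 => aZ               | 2, 3 => aY ⊕ aZ ⊕ acst 7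
  | 3, 1 => aX ⊕ aY ⊕ acst 14 | 3, 2 => aY ⊕ aZ ⊕ acst 2 | _, _ => aX ⊕ aZ
  end.

Lemma typeC_cell_magic :
  [/\ forall i, i < 4 ->
        typeC_cell i 0 ⊕ typeC_cell i 1 ⊕ typeC_cell i 2 ⊕ typeC_cell i 3 = acst 0,
      forall j, j < 4 ->
        typeC_cell 0 j ⊕ typeC_cell 1 j ⊕ typeC_cell 2 j ⊕ typeC_cell 3 j = acst 0,
      typeC_cell 0 0 ⊕ typeC_cell 1 1 ⊕ typeC_cell 2 2 ⊕ typeC_cell 3 3 = acst 0 &
      typeC_cell 0 3 ⊕ typeC_cell 1 2 ⊕ typeC_cell 2 1 ⊕ typeC_cell 3 0 = acst 0].
Proof. by split=> // [[|[|[|[|i]]]] | [|[|[|[|j]]]]]. Qed.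

Lemma typeC_cell_const_ltn i j : i < 4 -> j < 4 -> cpart (typeC_cell i j) < 16.
Proof. by case: i => [|[|[|[|i]]]]; case: j => [|[|[|[|j]]]]. Qed.

Lemma magic_typeC_cellE (s : nat -> nat -> nat) :
  (forall j, j < 4 -> s 0 j = j) -> (forall i, i < 4 -> s i 0 = 4 * i) ->
  (forall i, i < 4 -> is_quad (s i 0) (s i 1) (s i 2) (s i 3)) ->
  (forall j, j < 4 -> is_quad (s 0 j) (s 1 j) (s 2 j) (s 3 j)) ->
  is_quad (s 0 3) (s 1 2) (s 2 1) (s 3 0) ->
  forall i j, i < 4 -> j < 4 -> s i j = eval_aff (typeC_cell i j) (s 1 1) (s 1 2) (s 2 2).
Proof.
move=> row0 col0 rows cols antidiag.
set x := s 1 1; set y := s 1 2; set z := s 2 2.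
have f0 j : j < 4 -> s 0 j = eval_aff (typeC_cell 0 j) x y z.
  by move=> lt_j; rewrite row0 //; symmetry; exact: eval_acst.
have fi0 i : i < 4 -> s i 0 = eval_aff (typeC_cell i 0) x y z.
  by case: i => [|[|[|[|i]]]] // lt_i; rewrite col0 //; symmetry; exact: eval_acst.
have f11 : s 1 1 = eval_aff (typeC_cell 1 1) x y z by rewrite eval_aX.
have f12 : s 1 2 = eval_aff (typeC_cell 1 2) x y z by rewrite eval_aY.
have f22 : s 2 2 = eval_aff (typeC_cell 2 2) x y z by rewrite eval_aZ.
have f13 : s 1 3 = eval_aff (typeC_cell 1 3) x y z.
  by apply: quad_fourth (rows 1 isT) (fi0 1 isT) f11 f12 _.
have f21 : s 2 1 = eval_aff (typeC_cell 2 1) x y z.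
  by apply: quad_fourth _ (f0 3 isT) f12 (fi0 3 isT) _ => //; rewrite is_quad_swap.
have f23 : s 2 3 = eval_aff (typeC_cell 2 3) x y z.
  by apply: quad_fourth (rows 2 isT) (fi0 2 isT) f21 f22 _.
have f31 : s 3 1 = eval_aff (typeC_cell 3 1) x y z.
  by apply: quad_fourth (cols 1 isT) (f0 1 isT) f11 f21 _.
have f32 : s 3 2 = eval_aff (typeC_cell 3 2) x y z.
  by apply: quad_fourth (cols 2 isT) (f0 2 isT) f12 f22 _.
have f33 : s 3 3 = eval_aff (typeC_cell 3 3) x y z.
  by apply: quad_fourth (rows 3 isT) (fi0 3 isT) f31 f32 _.
move=> [|[|[|[|i]]]] [|[|[|[|j]]]] //= _ _; exact: f0 || exact: fi0.
Qed.

Definition cells : seq (nat * nat) := [seq (i, j) | i <- iota 0 4, j <- iota 0 4].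

Definition typeC_cells : seq affine := [seq typeC_cell c.1 c.2 | c <- cells].

Definition distinct_cells x y z : bool := uniq [seq eval_aff e x y z | e <- typeC_cells].

Lemma perm_cells : perm_eq [seq (val p.1, val p.2) | p <- enum {: 'I_4 * 'I_4}] cells.
Proof.
apply: uniq_perm => //.
  by rewrite map_inj_uniq ?enum_uniq // => -[a b] [c d] /= [/val_inj-> /val_inj->].
move=> [i j]; apply/mapP/allpairsP => [[[a b] _ [-> ->]] | [[i' j'] [lt_i lt_j [-> ->]]]].
  by exists (val a, val b); rewrite !mem_iota !ltn_ord.
rewrite !mem_iota in lt_i lt_j.
by exists (Ordinal lt_i, Ordinal lt_j); rewrite ?mem_enum.
Qed.

Lemma ixK k : k < 4 -> ix k = k :> nat.
Proof. exact: inordK. Qed.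

Section TypeCSquares.

Variable n : nat.
Hypothesis n_ge4 : 4 <= n.
Local Notation N := (2 ^ n).

Lemma typeC_cell_ltn (p : 'I_4 * 'I_4) (x y z : 'I_N) :
  eval_aff (typeC_cell p.1 p.2) x y z < N.
Proof.
have le16N : 16 <= N by rewrite -[16]/(2 ^ 4) leq_pexp2l.
apply: eval_ltn_pow2 => //; apply: leq_trans le16N.
exact: typeC_cell_const_ltn.
Qed.

Definition typeC_square (x y z : 'I_N) : square n :=
  [ffun p => Ordinal (typeC_cell_ltn p x y z)].

Lemma typeC_squareE x y z (i j : 'I_4) :
  typeC_square x y z (i, j) = eval_aff (typeC_cell i j) x y z :> nat.
Proof. by rewrite ffunE. Qed.

Lemma quad_square_typeC x y z : quad_square (typeC_square x y z) = distinct_cells x y z.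
Proof.
rewrite /quad_square /injectiveb /dinjectiveb -(map_inj_uniq val_inj) -map_comp.
rewrite /distinct_cells /typeC_cells -map_comp -(perm_uniq (perm_map _ perm_cells)) -map_comp.
rewrite -map_comp enumT; congr uniq; apply: eq_map => -[i j].
by rewrite /= typeC_squareE.
Qed.

Lemma typeC_square_magic (x y z : 'I_N) :
  distinct_cells x y z -> typeC_square x y z \in magic_typeC_squares n.
Proof.
have [rows cols diag anti] := typeC_cell_magic.
have ixE := (ixK 0 isT, ixK 1 isT, ixK 2 isT, ixK 3 isT).
have quadE e1 e2 e3 e4 : e1 ⊕ e2 ⊕ e3 ⊕ e4 = acst 0 ->
    is_quad (eval_aff e1 x y z) (eval_aff e2 x y z) (eval_aff e3 x y z) (eval_aff e4 x y z).
  by move=> sum0; rewrite is_quad_eval sum0 eval_acst.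
move=> dist; rewrite inE quad_square_typeC dist /magic /typeC /diag_quad /antidiag_quad.
rewrite !typeC_squareE !ixE; apply/and3P; split; first exact: isT.
  apply/and4P; split; [apply/forallP => i | apply/forallP => j | exact: quadE _ _ _ _ diag |
                        exact: quadE _ _ _ _ anti].
    by rewrite /row_quad !typeC_squareE !ixE quadE ?rows.
  by rewrite /col_quad !typeC_squareE !ixE quadE ?cols.
apply/andP; split; apply/forallP => i; rewrite typeC_squareE ixE.
  by rewrite -[typeC_cell 0 i]/(acst i) eval_acst.
by case: i => [[|[|[|[|i]]]] lt_i].
Qed.

Lemma magic_typeC_squareE S : S \in magic_typeC_squares n ->
  S = typeC_square (S (ix 1, ix 1)) (S (ix 1, ix 2)) (S (ix 2, ix 2)).
Proof.
rewrite inE => /and3P[_ /and4P[/forallP rows /forallP cols _ anti]].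
move=> /andP[/forallP row0 /forallP col0].
have row0' j : j < 4 -> S (ix 0, ix j) = j :> nat.
  by move=> lt_j; move: (row0 (ix j)); rewrite ixK // => /eqP.
have col0' i : i < 4 -> S (ix i, ix 0) = 4 * i :> nat.
  by move=> lt_i; move: (col0 (ix i)); rewrite ixK // => /eqP.
have cellE := magic_typeC_cellE (fun i j => S (ix i, ix j)) row0' col0'
  (fun i _ => rows (ix i)) (fun j _ => cols (ix j)) anti.
apply/ffunP => -[i j]; apply: ord_inj.
by rewrite typeC_squareE -cellE ?ltn_ord // /ix !inord_val.
Qed.

Lemma typeC_square_inj :
  injective (fun t : 'I_N * 'I_N * 'I_N => typeC_square t.1.1 t.1.2 t.2).
Proof.
move=> [[a b] c] [[a' b'] c'] /= E.
have := congr1 (fun S : square n =>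
  (val (S (ix 1, ix 1)), val (S (ix 1, ix 2)), val (S (ix 2, ix 2)))) E.
rewrite /= !typeC_squareE !(ixK 1 isT) !(ixK 2 isT) !eval_aX !eval_aY !eval_aZ.
by case=> /val_inj-> /val_inj-> /val_inj->.
Qed.

Lemma card_magic_typeC_squares :
  #|magic_typeC_squares n| =
  \sum_(0 <= x < N) \sum_(0 <= y < N) \sum_(0 <= z < N) distinct_cells x y z.
Proof.
rewrite -card_triples -(card_imset _ typeC_square_inj); apply: eq_card => S.
apply/idP/imsetP => [S_in | [t]]; last by rewrite inE => dist ->; exact: typeC_square_magic.
exists (S (ix 1, ix 1), S (ix 1, ix 2), S (ix 2, ix 2)); last exact: magic_typeC_squareE.
rewrite inE -quad_square_typeC -(magic_typeC_squareE _ S_in).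
by move: S_in; rewrite inE => /and3P[].
Qed.

End TypeCSquares.

(* A pattern records which of x, y, x^y, z, x^z, y^z, x^y^z vanish, i.e. the
   kernel of (a, b, c) |-> a x ^ b y ^ c z, a subspace of F_2^3. *)
Definition pattern := (bool * bool * bool * bool * bool * bool * bool)%type.

Definition kernel x y z : pattern :=
  (x == 0, y == 0, x == y, z == 0, z == x, z == y, z == Nat.lxor x y).

Definition in_kernel (p : pattern) (m : form) : bool :=
  let: (p1, p2, p3, p4, p5, p6, p7) := p in
  match m with
  | (false, false, false) => true
  | (true, false, false) => p1
  | (false, true, false) => p2
  | (true, true, false) => p3
  | (false, false, true) => p4
  | (true, false, true) => p5
  | (false, true, true) => p6
  | (true, true, true) => p7
  end.

Arguments in_kernel : simpl never.

Lemma in_kernelE m x y z : in_kernel (kernel x y z) m = (lin m x y z == 0).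
Proof.
by case: m => [[[] []] []]; rewrite /lin /= ?Nat.lxor_0_l ?Nat.lxor_0_r ?lxor_eq0 // eq_sym.
Qed.

Definition distinct_mod (p : pattern) x y z : bool :=
  pairwise (fun u v : form * nat => ~~ (in_kernel p (form_add u.1 v.1) && (u.2 == v.2)))
    [seq (lpart e, eval_aff e x y z) | e <- typeC_cells].

Lemma distinct_cells_mul16_add xh xl yh yl zh zl : xl < 16 -> yl < 16 -> zl < 16 ->
  distinct_cells (xh * 16 + xl) (yh * 16 + yl) (zh * 16 + zl) =
  distinct_mod (kernel xh yh zh) xl yl zl.
Proof.
move=> lt_x lt_y lt_z; rewrite /distinct_cells /distinct_mod uniq_pairwise !pairwise_map.
apply: (eq_in_pairwise (P := [pred c | cpart (typeC_cell c.1 c.2) < 16])); last by [].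
move=> c d; rewrite !inE => lt_c lt_d; rewrite /= in_kernelE -lin_add lxor_eq0.
by rewrite !(@eval_mul_pow2_add 4) // eq_mul_add_ltn // eval_ltn_pow2.
Qed.

Definition low_count (p : pattern) : nat :=
  \sum_(0 <= x < 16) \sum_(0 <= y < 16) \sum_(0 <= z < 16) distinct_mod p x y z.

Lemma sum_distinct_cells M :
  \sum_(0 <= x < M * 16) \sum_(0 <= y < M * 16) \sum_(0 <= z < M * 16) distinct_cells x y z =
  \sum_(0 <= xh < M) \sum_(0 <= yh < M) \sum_(0 <= zh < M) low_count (kernel xh yh zh).
Proof.
rewrite big_nat_mul_add3; apply: eq_bigr => xh _; apply: eq_bigr => yh _; apply: eq_bigr => zh _.
apply: eq_big_nat => xl /andP[_ lt_x]; apply: eq_big_nat => yl /andP[_ lt_y].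
by apply: eq_big_nat => zl /andP[_ lt_z]; rewrite distinct_cells_mul16_add.
Qed.

(* Representatives (x, y, z) of the seven kernels of dimension 2, resp. 1. *)
Definition plane_kernels : seq pattern :=
  [:: kernel 0 0 1; kernel 0 1 0; kernel 0 1 1; kernel 1 0 0; kernel 1 0 1; kernel 1 1 0;
      kernel 1 1 1].

Definition line_kernels : seq pattern :=
  [:: kernel 0 1 2; kernel 1 0 2; kernel 1 1 2; kernel 1 2 0; kernel 1 2 1; kernel 1 2 2;
      kernel 1 2 3].

Section KernelCount.

Variables (F : pattern -> nat) (k : nat).
Local Notation M := (2 ^ k).

Lemma sum_kernel_z x y s : x < M -> y < M -> uniq s -> s =i [:: 0; x; y; Nat.lxor x y] ->
  \sum_(0 <= z < M) F (kernel x y z) =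
  \sum_(z <- s) F (kernel x y z) +
  (M - size s) * F (x == 0, y == 0, x == y, false, false, false, false).
Proof.
move=> lt_x lt_y uniq_s span_s; apply: big_nat_const_off => // [|z _].
  apply/allP => z; rewrite span_s !inE => /or4P[] /eqP->; rewrite ?expn_gt0 ?lxor_ltn_pow2 //.
rewrite span_s !inE !negb_or => /and4P[z0 zx zy zxy].
by rewrite /kernel (negbTE z0) (negbTE zx) (negbTE zy) (negbTE zxy).
Qed.

Lemma sum_kernel_x0 :
  \sum_(0 <= y < M) \sum_(0 <= z < M) F (kernel 0 y z) =
  F (kernel 0 0 0) + (M - 1) * F (kernel 0 0 1) +
  (M - 1) * (F (kernel 0 1 0) + F (kernel 0 1 1) + (M - 2) * F (kernel 0 1 2)).
Proof.
have M_gt0 : 0 < M by rewrite expn_gt0.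
rewrite (@big_nat_const_off _ [:: 0] _
  (F (kernel 0 1 0) + F (kernel 0 1 1) + (M - 2) * F (kernel 0 1 2))) ?big_seq1 /= ?M_gt0 //
  => [|y lt_y].
  rewrite (@sum_kernel_z 0 0 [:: 0]) ?big_seq1 //.
  by move=> z; rewrite !inE Nat.lxor_0_l; case: (z == 0).
rewrite inE => y0; rewrite (@sum_kernel_z 0 y [:: 0; y]) ?M_gt0 //.
- by rewrite !big_cons big_nil /kernel /= Nat.lxor_0_l !eqxx (eq_sym 0 y) (negbTE y0) addn0.
- by rewrite /= inE eq_sym y0.
- by move=> z; rewrite !inE Nat.lxor_0_l; case: (z == 0); case: (z == y).
Qed.

Lemma sum_kernel_xy x y : x < M -> y < M -> x != 0 -> y != 0 -> y != x ->
  \sum_(0 <= z < M) F (kernel x y z) =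
  F (kernel 1 2 0) + F (kernel 1 2 1) + F (kernel 1 2 2) + F (kernel 1 2 3) +
  (M - 4) * F (kernel 1 2 4).
Proof.
move=> lt_x lt_y x0 y0 yx.
have xy0 : (Nat.lxor x y == 0) = false by rewrite lxor_eq0 eq_sym (negbTE yx).
rewrite (@sum_kernel_z x y [:: 0; x; y; Nat.lxor x y]) //; last first.
  rewrite /= !inE !negb_or !(eq_sym 0) x0 y0 xy0 (eq_sym x) yx.
  by rewrite -!(eq_sym (Nat.lxor x y)) lxor_eq_l lxor_eq_r x0 y0.
rewrite !big_cons big_nil /kernel /= !eqxx !(eq_sym 0) (eq_sym x y).
rewrite (negbTE x0) (negbTE y0) (negbTE yx) xy0 -!(eq_sym (Nat.lxor x y)).
by rewrite lxor_eq_l lxor_eq_r (negbTE x0) (negbTE y0) !addnA addn0.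
Qed.

Lemma sum_kernel_x x : x < M -> x != 0 ->
  \sum_(0 <= y < M) \sum_(0 <= z < M) F (kernel x y z) =
  F (kernel 1 0 0) + F (kernel 1 0 1) + (M - 2) * F (kernel 1 0 2) +
  (F (kernel 1 1 0) + F (kernel 1 1 1) + (M - 2) * F (kernel 1 1 2)) +
  (M - 2) * (F (kernel 1 2 0) + F (kernel 1 2 1) + F (kernel 1 2 2) + F (kernel 1 2 3) +
             (M - 4) * F (kernel 1 2 4)).
Proof.
move=> lt_x x0; have M_gt0 : 0 < M by rewrite expn_gt0.
rewrite (@big_nat_const_off _ [:: 0; x] _ (F (kernel 1 2 0) + F (kernel 1 2 1) +
  F (kernel 1 2 2) + F (kernel 1 2 3) + (M - 4) * F (kernel 1 2 4))); first last.
- by move=> y lt_y; rewrite !inE negb_or => /andP[y0 yx]; apply: sum_kernel_xy.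
- by rewrite /= M_gt0 lt_x.
- by rewrite /= inE eq_sym x0.
rewrite !big_cons big_nil addn0.
rewrite (@sum_kernel_z x 0 [:: 0; x]) ?(@sum_kernel_z x x [:: 0; x]) ?M_gt0 //.
- rewrite !big_cons !big_nil /kernel /= Nat.lxor_0_r Nat.lxor_nilpotent !eqxx.
  by rewrite !(eq_sym 0) (negbTE x0) !addn0.
- by rewrite /= inE eq_sym x0.
- by move=> z; rewrite !inE Nat.lxor_nilpotent; case: (z == 0); case: (z == x).
- by rewrite /= inE eq_sym x0.
- by move=> z; rewrite !inE Nat.lxor_0_r; case: (z == 0); case: (z == x).
Qed.

Lemma sum_kernel :
  \sum_(0 <= x < M) \sum_(0 <= y < M) \sum_(0 <= z < M) F (kernel x y z) =
  F (kernel 0 0 0) + (M - 1) * \sum_(p <- plane_kernels) F p +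
  (M - 1) * (M - 2) * \sum_(p <- line_kernels) F p +
  (M - 1) * (M - 2) * (M - 4) * F (kernel 1 2 4).
Proof.
rewrite big_ltn ?expn_gt0 // sum_kernel_x0.
under eq_big_nat => x /andP[x_gt0 lt_x] do rewrite sum_kernel_x -?lt0n //.
rewrite sum_nat_const_nat /plane_kernels /line_kernels !big_cons big_nil.
ring.
Qed.

End KernelCount.

Lemma low_count_full : low_count (kernel 0 0 0) = 10.
Proof. by rewrite /low_count !unlock; vm_compute. Qed.

Lemma low_count_planes : \sum_(p <- plane_kernels) low_count p = 85 * 16.
Proof. by rewrite /low_count !unlock; vm_compute. Qed.

Lemma low_count_lines : \sum_(p <- line_kernels) low_count p = 43 * 16 * 16.
Proof. by rewrite /low_count !unlock; vm_compute. Qed.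

Lemma low_count_zero : low_count (kernel 1 2 4) = 16 * 16 * 16.
Proof. by rewrite /low_count !unlock; vm_compute. Qed.

Import GRing.Theory Num.Theory.
Local Open Scope ring_scope.

Theorem mainTheorem8 (n : nat) (hn : (4 <= n)%N) :
  (#|magic_typeC_squares n|%:Z : int) =
    10 + 85 * ((2 ^ n)%:Z - 16)
       + 43 * ((2 ^ n)%:Z - 16) * ((2 ^ n)%:Z - 32)
       + ((2 ^ n)%:Z - 16) * ((2 ^ n)%:Z - 32) * ((2 ^ n)%:Z - 64).
Proof.
have [k ->] : exists k, n = (k + 4)%N by exists (n - 4)%N; rewrite subnK.
rewrite card_magic_typeC_squares ?leq_addl // expnD sum_distinct_cells sum_kernel.
rewrite low_count_full low_count_planes low_count_lines low_count_zero.
have M_cases : (2 ^ k = 1 \/ 2 ^ k = 2 \/ 4 <= 2 ^ k)%N.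
  by case: k => [|[|k]]; [left | right; left | right; right; rewrite -[4%N]/(2 ^ 2)%N leq_pexp2l].
move: (2 ^ k)%N M_cases => M [->|[->|M_ge4]]; [by [] | by [] |].
rewrite !PoszD !PoszM -!subzn ?(leq_trans _ M_ge4) //.
ring.
Qed.
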